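(* Let $p\ge1$, $\phi_1,\dots,\phi_p:\mathbb Z\to\mathbb C$, $v:\mathbb Z\to\mathbb C$, $s\in\mathbb Z$, and let $y:\{s-p+1,s-p+2,\dots\}\to\mathbb C$ satisfy $y_t=\sum_{l=1}^p\phi_l(t)y_{t-l}+v_t$ for all $t\ge s+1$. Then for all $t>s$, $$y_t=\sum_{m=1}^{p}\sum_{j=1}^{p-m+1}\phi_{m+j-1}(s+j)\,H(t,s+j)\,y_{s-m+1}+\sum_{j=1}^{t-s}H(t,s+j)\,v_{s+j}.$$
   Context: $\Gamma_t$ is the $p\times p$ companion matrix with first row $(\phi_1(t),\dots,\phi_p(t))$, entries $(i,i-1)$ equal to $1$ for $2\le i\le p$, other entries $0$. The Green's function is defined for integers $u$ and $t\ge u-p+1$ by: $H(t,u)$ is the $(1,1)$ entry of $\Gamma_t\Gamma_{t-1}\cdots\Gamma_{u+1}$ if $t>u$; $H(u,u)=1$; $H(t,u)=0$ if $u-p+1\le t<u$. *)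

From HB Require Import structures.
From mathcomp Require Import all_boot all_order all_algebra.
From mathcomp Require Import reals.
From mathcomp.real_closed Require Import complex.
Set Implicit Arguments. Unset Strict Implicit. Unset Printing Implicit Defensive.
Import Order.TTheory GRing.Theory Num.Theory.
Local Open Scope ring_scope.

(* Matrices are of size p.-1.+1, which equals p whenever p >= 1 (the paper's
   standing assumption); index 0 is the paper's index 1. *)

Definition companion (C : comRingType) (p : nat) (phi : nat -> int -> C)
  (t : int) : 'M[C]_(p.-1.+1) :=
  \matrix_(i, j) if (i == 0 :> nat) then phi j.+1 t
                 else if (i == j.+1 :> nat) then 1 else 0.

Fixpoint gprod (C : comRingType) (p : nat) (phi : nat -> int -> C)
  (u : int) (n : nat) : 'M[C]_(p.-1.+1) :=
  match n with
  | 0 => 1%:M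
  | n'.+1 => companion p phi (u + (n'.+1)%:Z) *m gprod p phi u n'
  end.

(* Green's function H(t,u): (1,1) entry of Gamma_t ... Gamma_{u+1} if t > u,
   1 if t = u, 0 if t < u (the paper only uses u-p+1 <= t < u there). *)
Definition green (C : comRingType) (p : nat) (phi : nat -> int -> C)
  (t u : int) : C :=
  if u < t then gprod p phi u `|t - u|%N ord0 ord0
  else if t == u then 1 else 0.

From HB Require Import structures.
From mathcomp Require Import all_boot all_order all_algebra.
From mathcomp Require Import reals.
From mathcomp.real_closed Require Import complex.
From mathcomp Require Import zify.
Import Order.TTheory GRing.Theory Num.Theory.
Set Implicit Arguments. Unset Strict Implicit. Unset Printing Implicit Defensive.
Local Open Scope ring_scope.

(* The first column of Gamma_{u+n} ... Gamma_{u+1} consists of the values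
   H(u+n, u), ..., H(u+n-p+1, u), so H(., u) solves the homogeneous
   recursion for t > u, with H(u, u) = 1 and H(t, u) = 0 for t < u.  Hence,
   by induction on t, a solution z of z_t = sum_l phi_l(t) z_{t-l} + w_t
   (t > s) vanishing up to time s is z_t = sum_j H(t, s+j) w_{s+j}.  Setting
   y to 0 up to time s turns the initial values into extra forcing
   sum_{l >= j} phi_l(s+j) y_{s+j-l} at time s+j; regrouping these terms
   along m = l - j + 1 gives the formula. *)

Section Green.
Variables (C : comRingType) (p : nat) (phi : nat -> int -> C).

Lemma green_lt t u : t < u -> green p phi t u = 0.
Proof.
move=> ltut; rewrite /green.
by have [-> ->] : (u < t) = false /\ (t == u) = false by split; lia.
Qed.

Lemma green_id t : green p phi t t = 1.
Proof. by rewrite /green ltxx eqxx. Qed.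

Lemma gprod_col0 u n (j : 'I_p.-1.+1) :
  gprod p phi u n j ord0 = green p phi (u + n%:Z - (j : nat)%:Z) u.
Proof.
elim: n j => [|n IHn] [[|j] ltjp] /=.
- by rewrite mxE subr0 addr0 green_id.
- by rewrite mxE green_lt //; lia.
- rewrite /green ifT; last by lia.
  have -> : `|(u + n.+1%:Z - 0 - u)%R|%N = n.+1 by lia.
  by rewrite [Ordinal _](_ : _ = ord0) //; apply: val_inj.
pose i : 'I_p.-1.+1 := Ordinal (ltnW ltjp).
rewrite mxE (bigD1 i) //= big1 => [|k ne_ki]; last first.
  rewrite !mxE /=; case: eqP => [eq_kj | _]; last by rewrite mul0r.
  by case/eqP: ne_ki; apply: val_inj; case: eq_kj.
rewrite /companion mxE /= eqxx mul1r addr0 IHn /=.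
by congr (green _ _ _ _); lia.
Qed.

Hypothesis p_gt0 : (0 < p)%N.

Lemma green_rec t u : u < t ->
  green p phi t u = \sum_(1 <= l < p.+1) phi l t * green p phi (t - l%:Z) u.
Proof.
move=> ltut; rewrite {1}/green ltut.
have [n def_n] : exists n, `|t - u|%N = n.+1 by exists `|t - u|%N.-1; lia.
pose F k := phi k.+1 t * green p phi (t - k.+1%:Z) u.
transitivity (\sum_(k < p.-1.+1) F k).
  rewrite def_n /= mxE; apply: eq_bigr => k _; rewrite gprod_col0 !mxE /=.
  by congr (phi _ _ * green _ _ _ _); lia.
by rewrite -(big_mkord xpredT F) prednK // big_add1.
Qed.

Lemma green_duhamel (s : int) (z w : int -> C) :
  (forall t, t <= s -> z t = 0) ->
  (forall t, s < t -> z t = \sum_(1 <= l < p.+1) phi l t * z (t - l%:Z) + w t) ->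
  forall (N : nat) t, t <= s + N%:Z ->
    z t = \sum_(1 <= j < N.+1) green p phi t (s + j%:Z) * w (s + j%:Z).
Proof.
move=> z_init z_rec; elim=> [|N IHN] t le_t.
  by rewrite big_geq // z_init //; lia.
rewrite big_nat_recr //=.
have [le_t_sN | gt_t_sN] := lerP t (s + N%:Z).
  by rewrite IHN // green_lt ?mul0r ?addr0 //; lia.
have def_t : s + N.+1%:Z = t by lia.
rewrite def_t green_id mul1r z_rec; last by lia.
congr (_ + _).
transitivity (\sum_(1 <= l < p.+1) \sum_(1 <= j < N.+1)
    phi l t * green p phi (t - l%:Z) (s + j%:Z) * w (s + j%:Z)).
  apply: eq_big_nat => l /andP[l_gt0 _].
  rewrite IHN ?mulr_sumr; last by lia.
  by apply: eq_bigr => j _; rewrite mulrA.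
rewrite exchange_big_nat; apply: eq_big_nat => j /andP[_ lejN].
by rewrite (@green_rec t) ?mulr_suml //; lia.
Qed.

End Green.

Lemma sum_nat_geq_shift (V : nmodType) (p j : nat) (F : nat -> V) : (0 < j)%N ->
  \sum_(1 <= l < p.+1 | (j <= l)%N) F l =
  \sum_(1 <= m < p.+1 | (m + j - 1 <= p)%N) F (m + j - 1)%N.
Proof.
move=> j_gt0.
rewrite -(big_nat_widenl _ _ _ xpredT _ j_gt0) -[j in \sum_(j <= _ < _) _](prednK j_gt0).
rewrite -add1n big_addn (big_nat_widen _ _ p.+1); last by lia.
by apply: eq_big => [m | m _]; [lia | congr F; lia].
Qed.

Lemma sum_triangle (V : nmodType) (p N : nat) (F : nat -> nat -> V) :
  (p <= N)%N ->
  \sum_(1 <= j < N.+1) \sum_(1 <= l < p.+1 | (j <= l)%N) F j l =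
  \sum_(1 <= m < p.+1) \sum_(1 <= j < (p - m + 1).+1) F j (m + j - 1)%N.
Proof.
move=> le_pN; rewrite big_nat_cond.
under eq_bigr => j /andP[/andP[j_gt0 _] _] do rewrite sum_nat_geq_shift //.
rewrite -big_nat_cond; under eq_bigr do rewrite big_mkcond /=.
rewrite exchange_big_nat; apply: eq_big_nat => m /andP[m_gt0 m_le_p].
rewrite -big_mkcond [RHS](big_nat_widen _ _ N.+1); last by lia.
by apply: eq_bigl => j; lia.
Qed.

Lemma sum_initial_forcing (C : comRingType) (p n : nat) (phi : nat -> int -> C)
    (s : int) (y : int -> C) (G : nat -> C) :
  (forall j, (n < j)%N -> G j = 0) ->
  \sum_(1 <= j < n.+1) G j * \sum_(1 <= l < p.+1 | s + j%:Z - l%:Z <= s)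
      phi l (s + j%:Z) * y (s + j%:Z - l%:Z) =
  \sum_(1 <= m < p.+1) \sum_(1 <= j < (p - m + 1).+1)
      phi (m + j - 1)%N (s + j%:Z) * G j * y (s - m%:Z + 1).
Proof.
move=> G_eq0.
transitivity (\sum_(1 <= j < (n + p).+1) \sum_(1 <= l < p.+1 | (j <= l)%N)
    phi l (s + j%:Z) * G j * y (s + j%:Z - l%:Z)).
  rewrite [RHS](big_cat_nat _ (n := n.+1)) //=; last by lia.
  rewrite [X in _ = _ + X]big_nat_cond [X in _ = _ + X]big1 ?addr0 => [|j /andP[/andP[lt_nj _] _]].
    apply: eq_big_nat => j /andP[j_gt0 _]; rewrite mulr_sumr.
    by apply: eq_big => [l | l _]; [lia | rewrite mulrA [G j * _]mulrC].
  by rewrite G_eq0 // big1 // => l _; rewrite mulr0 mul0r.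
rewrite sum_triangle; last by lia.
apply: eq_big_nat => m /andP[m_gt0 _]; apply: eq_bigr => j _.
by congr (_ * y _); lia.
Qed.

Theorem mainTheorem13 (R : realType) (p : nat) (hp : (1 <= p)%N)
  (phi : nat -> int -> R[i]) (v : int -> R[i]) (s : int) (y : int -> R[i])
  (hy : forall t : int, s + 1 <= t ->
          y t = \sum_(1 <= l < p.+1) phi l t * y (t - l%:Z) + v t) :
  forall t : int, s < t ->
    y t = \sum_(1 <= m < p.+1) \sum_(1 <= j < (p - m + 1).+1)
              phi (m + j - 1)%N (s + j%:Z) * green p phi t (s + j%:Z)
                * y (s - m%:Z + 1)
          + \sum_(1 <= j < `|t - s|%N.+1) green p phi t (s + j%:Z) * v (s + j%:Z).
Proof.
move=> t lt_st.
pose z u := if s < u then y u else 0.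
pose w u := v u + \sum_(1 <= l < p.+1 | u - l%:Z <= s) phi l u * y (u - l%:Z).
have z_init u : u <= s -> z u = 0 by rewrite /z ltNge => ->.
have z_rec u : s < u -> z u = \sum_(1 <= l < p.+1) phi l u * z (u - l%:Z) + w u.
  move=> lt_su; rewrite /z /w lt_su hy; last by lia.
  rewrite addrCA [LHS]addrC; congr (_ + _).
  rewrite [X in _ = _ + X]big_mkcond -big_split /=.
  apply: eq_bigr => l _; have [_ | _] := ltrP s (u - l%:Z).
    by rewrite addr0.
  by rewrite mulr0 add0r.
have le_t_st : t <= s + `|t - s|%N%:Z by lia.
have := green_duhamel hp z_init z_rec le_t_st; rewrite /z lt_st => ->.
under eq_bigr do rewrite mulrDr; rewrite big_split [LHS]addrC; congr (_ + _).
by apply: sum_initial_forcing => j lt_j; rewrite green_lt //; lia.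
Qed.
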